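(* Let $f,g:\mathbb{R}^2\to\mathbb{R}$ be Lipschitz continuous. If the graphons $(J_1,W_1)$ and $(J_2,W_2)$ are isomorphic up to nullsets, then the graphon dynamical systems $\mathcal D(J_1,W_1)$ and $\mathcal D(J_2,W_2)$ are isometric, i.e. there is a bijective isometry between $L^1(J_2)$ and $L^1(J_1)$ mapping trajectories of one system to trajectories of the other.
   Context: A graphon $(J,W)$ consists of a probability space $J=(\Omega,\mathcal A,\mu)$ and a symmetric measurable $W:\Omega\times\Omega\to[0,1]$. The graphon dynamical system $\mathcal D(J,W)$ is the flow on $L^1(J)$ given by $\dot u_x=f\big(u_x,\int_J W(x,y)g(u_x,u_y)\,d\mu(y)\big)$, where for each $t$ the equation holds for almost every $x$. Two graphons $(J_1,W_1)$, $(J_2,W_2)$ are isomorphic up to nullsets if there is a measure preserving map $\varphi:J_1\to J_2$, invertible up to nullsets, with $W_1(x,y)=W_2(\varphi(x),\varphi(y))$ almost everywhere. *)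

From HB Require Import structures.
From mathcomp Require Import all_boot all_order all_algebra.
From mathcomp Require Import all_classical all_reals all_analysis.
Import Order.TTheory GRing.Theory Num.Theory.
Import numFieldNormedType.Exports.

Set Implicit Arguments.
Unset Strict Implicit.
Unset Printing Implicit Defensive.

Local Open Scope classical_set_scope.
Local Open Scope ring_scope.

Section graphon_defs.
Context (R : realType).

Definition is_graphon d (T : measurableType d) (W : T -> T -> R) : Prop :=
  [/\ measurable_fun setT (fun p : T * T => W p.1 p.2),
      (forall x y, W x y = W y x) &
      (forall x y, 0 <= W x y <= 1)].

Definition measure_preserving d1 d2 (T1 : measurableType d1)
    (T2 : measurableType d2) (mu1 : probability T1 R) (mu2 : probability T2 R)
    (phi : T1 -> T2) : Prop :=
  measurable_fun setT phi /\
  (forall B : set T2, measurable B -> mu1 (phi @^-1` B) = mu2 B).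

Definition graphon_iso_nullsets d1 d2 (T1 : measurableType d1)
    (T2 : measurableType d2) (mu1 : probability T1 R) (W1 : T1 -> T1 -> R)
    (mu2 : probability T2 R) (W2 : T2 -> T2 -> R) : Prop :=
  exists (phi : T1 -> T2) (psi : T2 -> T1),
    [/\ measure_preserving mu1 mu2 phi,
        measure_preserving mu2 mu1 psi,
        {ae mu1, forall x, psi (phi x) = x},
        {ae mu2, forall y, phi (psi y) = y} &
        {ae (mu1 \x mu1)%E, forall p : T1 * T1, W1 p.1 p.2 = W2 (phi p.1) (phi p.2)}].

Definition L1 d (T : measurableType d) (mu : probability T R) (u : T -> R) : Prop :=
  mu.-integrable setT (EFin \o u).

Definition L1dist d (T : measurableType d) (mu : probability T R)
    (u v : T -> R) : \bar R :=
  (\int[mu]_x (`|u x - v x|%:E))%E.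

Definition graphon_field d (T : measurableType d) (mu : probability T R)
    (W : T -> T -> R) (f g : R * R -> R) (u : T -> R) : T -> R :=
  fun x => f (u x, Rintegral mu setT (fun y => W x y * g (u x, u y))).

Definition gds_trajectory d (T : measurableType d) (mu : probability T R)
    (W : T -> T -> R) (f g : R * R -> R) (u : R -> T -> R) : Prop :=
  (forall t, L1 mu (u t)) /\
  (forall t : R,
     (fun h : R => L1dist mu (fun x => (u (t + h) x - u t x) / h)
                              (graphon_field mu W f g (u t)))
       @ 0^' --> 0%E).

(* Phi (acting on representatives) induces a bijective isometry
   L^1(J2) -> L^1(J1): it maps L^1 to L^1, preserves L^1 distances (hence is
   well defined and injective on a.e.-classes) and is onto up to a.e.
   equality. *)
Definition L1_bij_isometry d2 d1 (T2 : measurableType d2)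
    (T1 : measurableType d1) (mu2 : probability T2 R) (mu1 : probability T1 R)
    (Phi : (T2 -> R) -> (T1 -> R)) : Prop :=
  [/\ (forall u, L1 mu2 u -> L1 mu1 (Phi u)),
      (forall u v, L1 mu2 u -> L1 mu2 v ->
         L1dist mu1 (Phi u) (Phi v) = L1dist mu2 u v) &
      (forall w, L1 mu1 w ->
         exists u, L1 mu2 u /\ {ae mu1, forall x, Phi u x = w x})].

End graphon_defs.

From HB Require Import structures.
From mathcomp Require Import all_boot all_order all_algebra.
From mathcomp Require Import all_classical all_reals all_analysis.
From mathcomp Require Import measurable_realfun.
Import Order.TTheory GRing.Theory Num.Theory.
Import numFieldNormedType.Exports.
Local Open Scope classical_set_scope.
Local Open Scope ring_scope.

(* phi acts on functions by u |-> u \o phi.  As phi is measure preserving and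
   invertible up to nullsets, the integral over J2 of ANY function F equals the
   integral over J1 of F \o phi (for F >= 0, squeeze it between the pullbacks
   along phi and along psi \o phi, which agree with F a.e.).  Measurability
   must be avoided: the field x |-> f(u x, \int W(x,y) g(u x, u y) dy) is not
   known to be measurable.  Hence L1 distances are preserved, and, as W1 and
   W2 \o (phi x phi) agree on almost every section, the field of D(J1,W1) at
   u \o phi is a.e. the field of D(J2,W2) at u composed with phi; so a curve
   and its image have the same L1 distances between difference quotients and
   fields. *)

Set Implicit Arguments.
Unset Strict Implicit.
Unset Printing Implicit Defensive.

Section integral_transport.
Local Open Scope ereal_scope.
Import HBNNSimple.
Context (R : realType).

Lemma ge0_le_integralT d (T : measurableType d) (mu : {measure set T -> \bar R})
    (f g : T -> \bar R) :
  (forall x, 0 <= f x) -> (forall x, f x <= g x) ->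
  \int[mu]_x f x <= \int[mu]_x g x.
Proof.
move=> f0 fg; have g0 x : 0 <= g x by exact: le_trans (f0 x) (fg x).
rewrite !ge0_integralTE//; apply: ereal_sup_le => _ [h /= hf <-].
by exists h => //= x; exact: le_trans (hf x) (fg x).
Qed.

Lemma ge0_ae_eq_le_integralT d (T : measurableType d)
    (mu : {measure set T -> \bar R}) (f g : T -> \bar R) :
  (forall x, 0 <= f x) -> (forall x, 0 <= g x) ->
  {ae mu, forall x, f x = g x} -> \int[mu]_x f x <= \int[mu]_x g x.
Proof.
move=> f0 g0 [N [mN N0 fgN]].
rewrite [leLHS]ge0_integralTE//; apply: ge_ereal_sup => _ [h /= hf <-].
rewrite -integralT_nnsfun (@ge0_negligible_integral _ _ _ _ setT N)//;
  first last.
- by move=> x _; rewrite lee_fin.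
- exact/measurable_EFinP/measurable_funP.
rewrite integral_mkcond; apply: ge0_le_integralT => x; rewrite patchE.
  by case: ifPn => _; rewrite ?lee_fin.
case: ifPn => //; rewrite inE => -[_ xN].
have -> : g x = f x by apply: contra_notP xN => gf; apply: fgN => fg; exact: gf.
exact: hf.
Qed.

Lemma ae_eq_integralT d (T : measurableType d) (mu : {measure set T -> \bar R})
    (f g : T -> \bar R) :
  {ae mu, forall x, f x = g x} -> \int[mu]_x f x = \int[mu]_x g x.
Proof.
move=> fg; rewrite integralE [RHS]integralE; congr (_ - _);
  apply/eqP; rewrite eq_le; apply/andP; split; apply: ge0_ae_eq_le_integralT;
  rewrite ?funepos_ge0 ?funeneg_ge0//;
  by apply: filterS fg => x fgx; rewrite ?funeposE ?funenegE fgx.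
Qed.

Section measure_preserving_map.
Context d1 d2 (T1 : measurableType d1) (T2 : measurableType d2).
Variables (mu1 : {measure set T1 -> \bar R}) (mu2 : {measure set T2 -> \bar R}).
Variables (phi : T1 -> T2) (mphi : measurable_fun setT phi).
Hypothesis mu1phi : forall B, measurable B -> mu1 (phi @^-1` B) = mu2 B.

Lemma ge0_integral_comp (F : T2 -> \bar R) :
  measurable_fun setT F -> (forall y, 0 <= F y) ->
  \int[mu1]_x F (phi x) = \int[mu2]_y F y.
Proof.
move=> mF F0; rewrite (@eq_measure_integral _ _ _ _ (pushforward mu1 phi)).
  by rewrite [RHS]ge0_integral_pushforward// preimage_setT.
by move=> A mA _; rewrite -mu1phi.
Qed.

Lemma ge0_le_integral_comp (F : T2 -> \bar R) : (forall y, 0 <= F y) ->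
  \int[mu2]_y F y <= \int[mu1]_x F (phi x).
Proof.
move=> F0; rewrite [leLHS]ge0_integralTE//.
apply: ge_ereal_sup => _ [h /= hF <-].
rewrite -integralT_nnsfun -ge0_integral_comp//; last first.
- by move=> y; rewrite lee_fin.
- exact/measurable_EFinP.
by apply: ge0_le_integralT => x /=; rewrite ?lee_fin//; exact: hF.
Qed.

End measure_preserving_map.

Lemma integral_comp d1 d2 (T1 : measurableType d1) (T2 : measurableType d2)
    (mu1 : {measure set T1 -> \bar R}) (mu2 : {measure set T2 -> \bar R})
    (phi : T1 -> T2) (psi : T2 -> T1) :
  measurable_fun setT phi ->
  (forall B, measurable B -> mu1 (phi @^-1` B) = mu2 B) ->
  measurable_fun setT psi ->
  (forall A, measurable A -> mu2 (psi @^-1` A) = mu1 A) ->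
  {ae mu2, forall y, phi (psi y) = y} ->
  forall F : T2 -> \bar R, \int[mu1]_x F (phi x) = \int[mu2]_y F y.
Proof.
move=> mphi mu1phi mpsi mu2psi phiK.
have ge0_comp (G : T2 -> \bar R) : (forall y, 0 <= G y) ->
    \int[mu1]_x G (phi x) = \int[mu2]_y G y.
  move=> G0; apply/eqP; rewrite eq_le ge0_le_integral_comp// andbT.
  rewrite -(@ae_eq_integralT _ _ _ (fun y => G (phi (psi y)))).
    exact: ge0_le_integral_comp mpsi mu2psi _ (fun x => G0 (phi x)).
  by apply: filterS phiK => y ->.
move=> F; rewrite integralE [RHS]integralE.
rewrite -!ge0_comp ?funepos_ge0 ?funeneg_ge0//.
by congr (_ - _); apply: eq_integral => x _; rewrite ?funeposE ?funenegE.
Qed.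

Lemma ae_product_measure1_xsection d1 d2 (T1 : measurableType d1)
    (T2 : measurableType d2) (mu1 : {measure set T1 -> \bar R})
    (mu2 : {sigma_finite_measure set T2 -> \bar R}) (P : T1 -> T2 -> Prop) :
  {ae (mu1 \x mu2), forall p, P p.1 p.2} ->
  {ae mu1, forall x, {ae mu2, forall y, P x y}}.
Proof.
move=> [N [mN N0 PN]].
have mxN : measurable_fun setT (fun x => mu2 (xsection N x)).
  exact: measurable_fun_xsection.
have /(ae_eq_integral_abs mu1 measurableT mxN) :
    \int[mu1]_x `|mu2 (xsection N x)| = 0.
  by rewrite -[RHS]N0; apply: eq_integral => x _; rewrite gee0_abs.
apply: filterS => x /(_ I) /= Nx0; exists (xsection N x).
split; [exact: measurable_xsection | exact: Nx0 |].
by move=> y /= nP; apply/mem_set/PN.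
Qed.

End integral_transport.

Lemma L1_comp (R : realType) d1 d2 (T1 : measurableType d1)
    (T2 : measurableType d2) (mu1 : probability T1 R) (mu2 : probability T2 R)
    (phi : T1 -> T2) (u : T2 -> R) :
  measure_preserving mu1 mu2 phi -> L1 mu2 u -> L1 mu1 (u \o phi).
Proof.
move=> [mphi mu1phi] /integrableP[mu iu]; apply/integrableP; split.
  exact: measurableT_comp mu mphi.
rewrite (ge0_integral_comp mphi mu1phi (F := fun y => `|(u y)%:E|)%E)//.
exact: measurableT_comp.
Qed.

Section graphon_transport.
Context (R : realType) d1 d2 (T1 : measurableType d1) (T2 : measurableType d2).
Variables (mu1 : probability T1 R) (mu2 : probability T2 R).
Variables (phi : T1 -> T2) (psi : T2 -> T1).
Hypothesis (phi_mp : measure_preserving mu1 mu2 phi).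
Hypothesis (psi_mp : measure_preserving mu2 mu1 psi).
Hypothesis (psiK : {ae mu1, forall x, psi (phi x) = x}).
Hypothesis (phiK : {ae mu2, forall y, phi (psi y) = y}).

Let integral_phi (F : T2 -> \bar R) :
  (\int[mu1]_x F (phi x) = \int[mu2]_y F y)%E.
Proof.
by move: phi_mp psi_mp => [? ?] [? ?]; exact: (integral_comp _ _ _ _ phiK).
Qed.

Lemma L1dist_comp (u v : T2 -> R) :
  L1dist mu1 (u \o phi) (v \o phi) = L1dist mu2 u v.
Proof. exact: (integral_phi (fun y => `|u y - v y|%:E)). Qed.

Lemma L1_bij_isometry_comp : L1_bij_isometry mu2 mu1 (fun u => u \o phi).
Proof.
split=> [u|u v _ _|w Lw]; [exact: L1_comp phi_mp | exact: L1dist_comp |].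
exists (w \o psi); split; first exact: L1_comp psi_mp Lw.
by apply: filterS psiK => x /= ->.
Qed.

Variables (W1 : T1 -> T1 -> R) (W2 : T2 -> T2 -> R) (f g : R * R -> R).
Hypothesis W12 :
  {ae mu1, forall x, {ae mu1, forall y, W1 x y = W2 (phi x) (phi y)}}.

Lemma graphon_field_comp (u : T2 -> R) :
  {ae mu1, forall x,
    graphon_field mu1 W1 f g (u \o phi) x = graphon_field mu2 W2 f g u (phi x)}.
Proof.
apply: filterS W12 => x W12x.
congr (f (_, fine _)).
rewrite -(integral_phi (fun y => (W2 (phi x) y * g (u (phi x), u y))%:E)).
by apply: ae_eq_integralT; apply: filterS W12x => y /= ->.
Qed.

Lemma gds_trajectory_comp :
  forall u : R -> T2 -> R, (forall t, L1 mu2 (u t)) ->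
  gds_trajectory mu2 W2 f g u <->
  gds_trajectory mu1 W1 f g (fun t => u t \o phi).
Proof.
move=> u Lu.
have dist_quotient t h :
    L1dist mu1 (fun x => (u (t + h) (phi x) - u t (phi x)) / h)
      (graphon_field mu1 W1 f g (u t \o phi)) =
    L1dist mu2 (fun y => (u (t + h) y - u t y) / h)
      (graphon_field mu2 W2 f g (u t)).
  rewrite -L1dist_comp; apply: ae_eq_integralT.
  by apply: filterS (graphon_field_comp (u t)) => x /= ->.
split=> -[_ du]; split=> t.
- exact: L1_comp phi_mp (Lu t).
- by under eq_fun do rewrite dist_quotient; exact: du.
- exact: Lu.
- by move: (du t); under eq_fun do rewrite dist_quotient.
Qed.

End graphon_transport.

Theorem corollary3p13 (R : realType) (f g : R * R -> R)
    (d1 : measure_display) (T1 : measurableType d1) (mu1 : probability T1 R)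
    (W1 : T1 -> T1 -> R)
    (d2 : measure_display) (T2 : measurableType d2) (mu2 : probability T2 R)
    (W2 : T2 -> T2 -> R) :
  lipschitz f -> lipschitz g ->
  is_graphon W1 -> is_graphon W2 ->
  graphon_iso_nullsets mu1 W1 mu2 W2 ->
  exists Phi : (T2 -> R) -> (T1 -> R),
    L1_bij_isometry mu2 mu1 Phi /\
    (forall u : R -> T2 -> R, (forall t, L1 mu2 (u t)) ->
       (gds_trajectory mu2 W2 f g u <->
        gds_trajectory mu1 W1 f g (fun t => Phi (u t)))).
Proof.
move=> _ _ _ _ [phi [psi [phi_mp psi_mp psiK phiK W12]]].
have W12x := ae_product_measure1_xsection
  (P := fun x y => W1 x y = W2 (phi x) (phi y)) W12.
exists (fun u => u \o phi); split.
- exact: L1_bij_isometry_comp phi_mp psi_mp psiK phiK.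
- exact: (gds_trajectory_comp phi_mp psi_mp phiK f g W12x).
Qed.
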